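(* Let $A\subset\mathbb{R}$ be a finite set. Then there exists a subset $A'\subseteq A$ with $|A'|\geq |A|/2$ such that for all $a\in A'$, $$|A(A+a)|\gg |A|^{3/2},$$ where $A(A+a)=\{b(c+a): b,c\in A\}$.
   Context: $X\gg Y$ means $X\geq cY$ for some absolute constant $c>0$ (independent of $A$ and $a$). *)

From mathcomp Require Import all_boot all_order finmap.
From mathcomp Require Import Rstruct.
From Stdlib Require Import Reals.

Open Scope fset_scope.

Definition prodShift (A : {fset R}) (a : R) : {fset R} :=
  [fset (b * (c + a))%R | b : R in A, c : R in A].

(* For b, c in A with b <> 0 the line x |-> b (c + x) takes at every a in A a value
   in A(A+a); there are about |A|^2 such lines, and two of them meet at most once.
   Suppose more than half of A is poor, i.e. |A(A+a)| < |A|^(3/2)/64, and list the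
   poor shifts as a_1 < ... < a_s.  For consecutive a_i, a_(i+1), sending a line to
   the ranks of its values in A(A+a_i) and A(A+a_(i+1)) is an injection into an
   n-by-n grid, n ~ |A|^(3/2)/64.  Cutting the grid into sqrt|A|-by-sqrt|A| cells
   and applying Cauchy-Schwarz along the antidiagonals of cells yields many pairs of
   lines that either share a cell (few of them) or swap order between a_i and
   a_(i+1).  A pair swaps order in at most one strip, so summing over i gives
   s <= |A|/16 + 2, a contradiction. *)

From mathcomp Require Import all_boot all_order finmap.
From mathcomp Require Import Rstruct zify.
From Stdlib Require Import Reals Lra.
(* Stdlib's Reals rebinds [_ ^ _] in nat_scope; restore ssrnat's [expn]. *)
From mathcomp Require Import ssrnat.

Import Order.TTheory.

Local Open Scope nat_scope.

Lemma sum_sqr_le (D : nat) (c : nat -> nat) :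
  (\sum_(j < D) c j) ^ 2 <= D * \sum_(j < D) c j ^ 2.
Proof.
elim: D => [|D IH]; first by rewrite !big_ord0.
rewrite !big_ord_recr /=.
set S := \sum_(i < D) c i in IH *; set Q := \sum_(i < D) c i ^ 2 in IH *.
have cross : 2 * (S * c D) <= Q + D * c D ^ 2.
  have [D0 | D_gt0] := posnP D.
    by move: IH; rewrite D0 mul0n leqn0 expn_eq0 => /andP[/eqP-> _].
  rewrite -(leq_pmul2l D_gt0).
  have := (nat_Cauchy S (D * c D)).1; nia.
nia.
Qed.

Lemma sum_count_classes {T : eqType} {s : seq T} {d : T -> nat} {D : nat}
    (F : nat -> nat) :
  {in s, forall x, d x < D} ->
  \sum_(x <- s) F (d x) = \sum_(j < D) count (fun x => d x == j) s * F j.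
Proof.
elim: s => [|x s IH] lt_dD; first by rewrite big_nil big1.
rewrite big_cons IH => [|y s_y]; last by rewrite lt_dD // inE s_y orbT.
have lt_dxD : d x < D by rewrite lt_dD ?mem_head.
under [RHS]eq_bigr => j _ do rewrite /= mulnDl.
rewrite big_split /=; congr (_ + _).
rewrite (bigD1 (Ordinal lt_dxD)) //= eqxx mul1n big1 ?addn0 // => j.
by rewrite -val_eqE /= eq_sym => /negbTE->.
Qed.

Lemma sum_le1_of_exclusive (s : nat) (P : nat -> bool) :
  (forall i j, i < j < s -> P i -> P j -> False) -> \sum_(i < s) P i <= 1.
Proof.
elim: s => [|s IH] excl; first by rewrite big_ord0.
rewrite big_ord_recr /=; case Ps: (P s).
  rewrite big1 // => i _; case Pi: (P i) => //.
  by exfalso; apply: (excl i s); rewrite ?ltn_ord ?ltnSn.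
rewrite addn0 IH // => i j /andP[ij js]; apply: excl; rewrite ij; exact: ltnW.
Qed.

Definition inverted {T : Type} (r1 r2 : T -> nat) (x y : T) : bool :=
  (r1 x < r1 y) && (r2 y < r2 x) || (r1 y < r1 x) && (r2 x < r2 y).

Section GridCounting.

Variables (T : eqType) (s : seq T) (r1 r2 : T -> nat) (n l : nat).
Hypotheses (l_gt0 : 0 < l) (s_uniq : uniq s).
Hypothesis r_inj : {in s &, forall x y, r1 x = r1 y -> r2 x = r2 y -> x = y}.
Hypotheses (r1_lt : {in s, forall x, r1 x < n}) (r2_lt : {in s, forall x, r2 x < n}).

Let diag x := r1 x %/ l + r2 x %/ l.

Let same_cell x y := (r1 x %/ l == r1 y %/ l) && (r2 x %/ l == r2 y %/ l).

Let same_diag_le x y : (diag x == diag y) <= inverted r1 r2 x y + same_cell x y.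
Proof.
rewrite /diag /same_cell /inverted; case: eqP => //= diag_xy.
have lt_of_ltdiv a b : a %/ l < b %/ l -> a < b.
  by apply: contraTT; rewrite -!leqNgt; apply: leq_div2r.
case: (ltngtP (r1 x %/ l) (r1 y %/ l)) => lt1.
- have lt2 : r2 y %/ l < r2 x %/ l by lia.
  by rewrite (lt_of_ltdiv _ _ lt1) (lt_of_ltdiv _ _ lt2).
- have lt2 : r2 x %/ l < r2 y %/ l by lia.
  by rewrite (lt_of_ltdiv _ _ lt1) (lt_of_ltdiv _ _ lt2) orbT.
- have -> : r2 x %/ l = r2 y %/ l by lia.
  by rewrite eqxx addn1.
Qed.

Let count_same_cell_le x : count (same_cell x) s <= l ^ 2.
Proof.
pose cell u := iota (u %/ l * l) l.
have in_cell u : u \in cell u.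
  by rewrite mem_iota leq_divM /=; have := ltn_ceil u l_gt0; lia.
rewrite -size_filter -(size_map (fun y => (r1 y, r2 y))).
have <- : size [seq (i, j) | i <- cell (r1 x), j <- cell (r2 x)] = l ^ 2.
  by rewrite size_allpairs !size_iota.
apply: uniq_leq_size.
  rewrite map_inj_in_uniq ?filter_uniq // => y z.
  by rewrite !mem_filter => /andP[_ s_y] /andP[_ s_z] [/r_inj-/(_ s_y s_z)].
move=> p /mapP[y]; rewrite mem_filter => /andP[/andP[/eqP e1 /eqP e2] _] ->.
by apply/allpairsP; exists (r1 y, r2 y); rewrite /cell e1 e2 !in_cell.
Qed.

(* Two points on the same antidiagonal of cells either share a cell or are inverted. *)
Lemma sqr_size_le_inversions :
  size s ^ 2 <= (2 * (n %/ l)).+1 *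
    (\sum_(x <- s) \sum_(y <- s) inverted r1 r2 x y + l ^ 2 * size s).
Proof.
set D := (2 * (n %/ l)).+1.
have diag_lt : {in s, forall x, diag x < D}.
  move=> x s_x; rewrite /diag /D.
  have := leq_div2r l (ltnW (r1_lt _ s_x)); have := leq_div2r l (ltnW (r2_lt _ s_x)).
  lia.
pose c j := count (fun y => diag y == j) s.
have size_sum : size s = \sum_(j < D) c j.
  rewrite -sum1_size (sum_count_classes (fun=> 1) diag_lt).
  by apply: eq_bigr => j _; rewrite muln1.
have same_diag_sum :
    \sum_(x <- s) \sum_(y <- s) (diag x == diag y) = \sum_(j < D) c j ^ 2.
  rewrite (eq_bigr (fun x => c (diag x))); last first.
    move=> x _; rewrite /c -sum1_count [RHS]big_mkcond.
    by apply: eq_bigr => y _; rewrite eq_sym; case: eqP.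
  by rewrite (sum_count_classes c diag_lt); apply: eq_bigr => j _; rewrite mulnn.
have same_diag_le_sum : \sum_(x <- s) \sum_(y <- s) (diag x == diag y) <=
    \sum_(x <- s) \sum_(y <- s) inverted r1 r2 x y + l ^ 2 * size s.
  rewrite mulnC -sum1_size big_distrl -big_split /=; apply: leq_sum => x _.
  rewrite mul1n.
  have := leq_sum s (fun y (_ : true) => same_diag_le x y).
  rewrite big_split /= => /leq_trans; apply; rewrite leq_add2l.
  apply: leq_trans (count_same_cell_le x).
  rewrite -sum1_count [in X in _ <= X]big_mkcond.
  by apply: eq_leq; apply: eq_bigr => y _; case: (same_cell x y).
rewrite {1}size_sum; apply: leq_trans (sum_sqr_le D c) _.
by rewrite -same_diag_sum leq_mul2l same_diag_le_sum orbT.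
Qed.

End GridCounting.

Definition rank (Y : {fset R}) (y : R) : nat := index y (sort <=%O (Y : seq R)).

Lemma rank_lt_card {Y : {fset R}} {y : R} : y \in Y -> rank Y y < #|` Y|.
Proof. by rewrite /rank -(size_sort <=%O) index_mem mem_sort. Qed.

Lemma rank_inj (Y : {fset R}) : {in Y &, injective (rank Y)}.
Proof. by move=> y y' Yy Yy'; apply: index_inj; rewrite ?mem_sort. Qed.

Lemma rank_lt_Rlt {Y : {fset R}} {y y' : R} :
  y \in Y -> y' \in Y -> rank Y y < rank Y y' -> (y < y')%R.
Proof.
move=> Yy Yy' lt_rank; apply/RltP.
have Y_sorted : sorted <%O (sort <=%O (Y : seq R)).
  by rewrite sort_lt_sorted fset_uniq.
by apply: (sorted_ltn_index lt_trans Y_sorted); rewrite ?mem_sort.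
Qed.

Definition line_at (L : R * R) (x : R) : R := (L.1 * (L.2 + x))%R.

Definition lines (A : {fset R}) : seq (R * R) :=
  [seq (b, c) | b <- [seq b <- (A : seq R) | b != 0%R], c <- (A : seq R)].

Definition crosses (a b : R) (L1 L2 : R * R) : bool :=
  Rltb ((line_at L1 a - line_at L2 a) * (line_at L1 b - line_at L2 b)) 0.

Lemma affine_sign_change_once (p q x1 x2 x3 x4 : R) :
  (x1 < x2 -> x2 <= x3 -> x3 < x4 ->
   (p * x1 + q) * (p * x2 + q) < 0 -> (p * x3 + q) * (p * x4 + q) < 0 -> False)%R.
Proof.
move=> lt12 le23 lt34 sign12 sign34.
have [p_ge0 | p_lt0] := Rle_lt_dec 0 p.
- have le12 : (p * x1 + q <= p * x2 + q)%R by nra.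
  have le23' : (p * x2 + q <= p * x3 + q)%R by nra.
  have le34 : (p * x3 + q <= p * x4 + q)%R by nra.
  have pos2 : (0 < p * x2 + q)%R by nra.
  nra.
- have le21 : (p * x2 + q <= p * x1 + q)%R by nra.
  have le32 : (p * x3 + q <= p * x2 + q)%R by nra.
  have le43 : (p * x4 + q <= p * x3 + q)%R by nra.
  have neg2 : (p * x2 + q < 0)%R by nra.
  nra.
Qed.

Lemma crosses_once (L1 L2 : R * R) (x1 x2 x3 x4 : R) :
  (x1 < x2)%R -> (x2 <= x3)%R -> (x3 < x4)%R ->
  crosses x1 x2 L1 L2 -> crosses x3 x4 L1 L2 -> False.
Proof.
case: L1 L2 => [b1 c1] [b2 c2] lt12 le23 lt34 /RltbP cr12 /RltbP cr34.
have affine x : (line_at (b1, c1) x - line_at (b2, c2) x =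
    (b1 - b2) * x + (b1 * c1 - b2 * c2))%R by rewrite /line_at /=; ring.
rewrite !affine in cr12 cr34.
exact: (affine_sign_change_once _ _ _ _ _ _ lt12 le23 lt34 cr12 cr34).
Qed.

Lemma sum_crosses_consecutive_le1 (xs : seq R) (L1 L2 : R * R) :
  sorted <%O xs ->
  \sum_(i < (size xs).-1) crosses (nth 0%R xs i) (nth 0%R xs i.+1) L1 L2 <= 1.
Proof.
move=> xs_sorted.
pose P i := crosses (nth 0%R xs i) (nth 0%R xs i.+1) L1 L2.
apply: (sum_le1_of_exclusive _ P).
move=> i j /andP[lt_ij]; rewrite ltn_predRL => lt_j.
have lt_nth i' j' : i' < j' < size xs -> (nth 0%R xs i' < nth 0%R xs j')%R.
  move=> /andP[lt_ij' lt_j']; apply/RltP.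
  by rewrite lt_sorted_ltn_nth // inE (ltn_trans lt_ij').
apply: (crosses_once _ _ _ _ _ _ (lt_nth i i.+1 _) _ (lt_nth j j.+1 _));
  try (apply/andP; split; lia).
apply/RleP; rewrite lt_sorted_leq_nth // inE.
- exact: leq_ltn_trans lt_ij (ltnW lt_j).
- exact: ltnW.
Qed.

Section LinesThroughA.

Variable A : {fset R}.

Lemma lines_uniq : uniq (lines A).
Proof.
apply: allpairs_uniq; [exact: filter_uniq (fset_uniq A) | exact: fset_uniq |].
by move=> [? ?] [? ?] _ _.
Qed.

Lemma mem_lines L : L \in lines A -> [/\ L.1 \in A, L.1 <> 0%R & L.2 \in A].
Proof.
case/allpairsP => [[b c] [/= Ab Ac ->]] /=.
by move: Ab; rewrite mem_filter => /andP[/eqP b_neq0 Ab].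
Qed.

Lemma size_lines : (#|` A| - 1) * #|` A| <= size (lines A).
Proof.
rewrite /lines size_allpairs size_filter leq_mul2r; apply/orP; right.
have count0_le1 : count (predC (fun b : R => b != 0%R)) A <= 1.
  have -> : count (predC (fun b : R => b != 0%R)) A = count_mem 0%R A.
    by apply: eq_count => x /=; rewrite negbK.
  by rewrite (count_uniq_mem _ (fset_uniq A)); case: (_ \in _).
by rewrite -(count_predC (fun b : R => b != 0%R) A) leq_subLR addnC leq_add2r.
Qed.

Lemma line_at_mem {L a} : L \in lines A -> a \in A -> line_at L a \in prodShift A a.
Proof.
move=> /mem_lines[Ab _ Ac] Aa; rewrite /prodShift /line_at.
exact: (in_imfset2 _ (fun b c : R => (b * (c + a))%R)).
Qed.

Lemma line_at_inj {L1 L2 a b} : a <> b -> L1 \in lines A -> L2 \in lines A ->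
  line_at L1 a = line_at L2 a -> line_at L1 b = line_at L2 b -> L1 = L2.
Proof.
case: L1 L2 => [b1 c1] [b2 c2] neq_ab /mem_lines[_ b1_neq0 _] _.
rewrite /line_at /= => eq_a eq_b.
have eq_slope : b1 = b2.
  have : ((b1 - b2) * (a - b) = 0)%R by nra.
  by case/Rmult_integral => ?; lra.
have eq_c : c1 = c2.
  by move: eq_a; rewrite -eq_slope => /(Rmult_eq_reg_l _ _ _)/(_ b1_neq0); lra.
by rewrite eq_slope eq_c.
Qed.

Lemma inverted_crosses a b L1 L2 : L1 \in lines A -> L2 \in lines A ->
  a \in A -> b \in A ->
  inverted (fun L => rank (prodShift A a) (line_at L a))
           (fun L => rank (prodShift A b) (line_at L b)) L1 L2
  <= crosses a b L1 L2.
Proof.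
move=> L1A L2A Aa Ab.
have [L1a L2a] := (line_at_mem L1A Aa, line_at_mem L2A Aa).
have [L1b L2b] := (line_at_mem L1A Ab, line_at_mem L2A Ab).
case inv: (inverted _ _ _ _) => //; rewrite lt0b; apply/RltbP.
move: inv; rewrite /inverted => /orP[] /andP[lt_a lt_b].
- have := rank_lt_Rlt L1a L2a lt_a; have := rank_lt_Rlt L2b L1b lt_b; nra.
- have := rank_lt_Rlt L2a L1a lt_a; have := rank_lt_Rlt L1b L2b lt_b; nra.
Qed.

Lemma sqr_size_lines_le_crossings a b n l :
  0 < l -> a \in A -> b \in A -> a <> b ->
  #|` prodShift A a| <= n -> #|` prodShift A b| <= n ->
  size (lines A) ^ 2 <= (2 * (n %/ l)).+1 *
    (\sum_(L1 <- lines A) \sum_(L2 <- lines A) crosses a b L1 L2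
     + l ^ 2 * size (lines A)).
Proof.
move=> l_gt0 Aa Ab neq_ab card_a card_b.
pose r1 L := rank (prodShift A a) (line_at L a).
pose r2 L := rank (prodShift A b) (line_at L b).
have r_inj : {in lines A &, forall L1 L2, r1 L1 = r1 L2 -> r2 L1 = r2 L2 -> L1 = L2}.
  move=> L1 L2 L1A L2A eq1 eq2; apply: (line_at_inj neq_ab L1A L2A).
  - exact: rank_inj (line_at_mem L1A Aa) (line_at_mem L2A Aa) eq1.
  - exact: rank_inj (line_at_mem L1A Ab) (line_at_mem L2A Ab) eq2.
have r1_lt : {in lines A, forall L, r1 L < n}.
  by move=> L LA; apply: leq_trans (rank_lt_card (line_at_mem LA Aa)) card_a.
have r2_lt : {in lines A, forall L, r2 L < n}.
  by move=> L LA; apply: leq_trans (rank_lt_card (line_at_mem LA Ab)) card_b.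
have := sqr_size_le_inversions _ _ _ _ _ _ l_gt0 lines_uniq r_inj r1_lt r2_lt.
move/leq_trans; apply.
rewrite leq_mul2l leq_add2r; apply/orP; right.
rewrite big_seq [X in _ <= X]big_seq; apply: leq_sum => L1 L1A.
rewrite big_seq [X in _ <= X]big_seq; apply: leq_sum => L2 L2A.
exact: inverted_crosses.
Qed.

Lemma few_small_shifts (xs : seq R) n l :
  0 < l -> sorted <%O xs -> {subset xs <= A} ->
  {in xs, forall a, #|` prodShift A a| <= n} ->
  l ^ 2 * (size xs).-1 <= size (lines A) ->
  (size xs).-1 <= 2 * (2 * (n %/ l)).+1.
Proof.
move=> l_gt0 xs_sorted sub_xsA small_xs few_xs.
set m := size (lines A) in few_xs *; set s := (size xs).-1 in few_xs *.
set D := (2 * (n %/ l)).+1; pose x i := nth 0%R xs i.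
pose C i := \sum_(L1 <- lines A) \sum_(L2 <- lines A) crosses (x i) (x i.+1) L1 L2.
have strip (i : 'I_s) : m ^ 2 <= D * (C i + l ^ 2 * m).
  have lt_i1 : i.+1 < size xs by rewrite -ltn_predRL.
  have x_neq : x i <> x i.+1.
    apply/eqP; rewrite lt_eqF // lt_sorted_ltn_nth // inE ?(ltnW lt_i1) //.
  by apply: sqr_size_lines_le_crossings; rewrite ?sub_xsA ?small_xs ?mem_nth // ltnW.
have total : \sum_(i < s) C i <= m ^ 2.
  have -> : m ^ 2 = \sum_(L1 <- lines A) \sum_(L2 <- lines A) 1.
    rewrite -mulnn /m -sum1_size big_distrl /=.
    by apply: eq_bigr => L1 _; rewrite mul1n.
  rewrite /C exchange_big; apply: leq_sum => L1 _.
  rewrite exchange_big; apply: leq_sum => L2 _.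
  exact: sum_crosses_consecutive_le1.
have : s * m ^ 2 <= D * (2 * m ^ 2).
  rewrite -[s in s * _]card_ord -sum_nat_const.
  apply: leq_trans (leq_sum _ (fun i _ => strip i)) _.
  rewrite -big_distrr leq_mul2l big_split /= sum_nat_const card_ord.
  rewrite mul2n -addnn; apply: leq_add; first exact: total.
  by rewrite mulnA -mulnn leq_mul2r (mulnC s) few_xs orbT.
have [m0 | m_gt0] := posnP m.
  by move: few_xs; rewrite m0 leqn0 muln_eq0 expn_eq0 eqn0Ngt l_gt0 /= => /eqP->.
by rewrite mulnA (mulnC D) leq_pmul2r // expn_gt0 m_gt0.
Qed.

End LinesThroughA.

Definition rich_shifts (A : {fset R}) : {fset R} :=
  [fset a in A | Nat.sqrt #|` A| * #|` A| <= 64 * #|` prodShift A a|].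

Lemma mem_rich_shifts A a : (a \in rich_shifts A) =
  (a \in A) && (Nat.sqrt #|` A| * #|` A| <= 64 * #|` prodShift A a|).
Proof. by rewrite !inE. Qed.

Lemma rich_shifts_sub A : rich_shifts A `<=` A.
Proof. by apply/fsubsetP => a; rewrite mem_rich_shifts => /andP[]. Qed.

Lemma card_prodShift_gt0 {A a} : a \in A -> 0 < #|` prodShift A a|.
Proof.
move=> Aa; rewrite cardfs_gt0; apply/fset0Pn; exists (a * (a + a))%R.
exact: (in_imfset2 _ (fun b c : R => (b * (c + a))%R)).
Qed.

Lemma poor_shifts_few A : 2 * #|` A `\` rich_shifts A| <= #|` A|.
Proof.
set k := #|` A|; set t := Nat.sqrt k; set B := A `\` rich_shifts A.
have [sqrt_le sqrt_gt] := Nat.sqrt_spec k (Nat.le_0_l k).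
rewrite -/t in sqrt_le sqrt_gt.
rewrite leqNgt; apply/negP => many_B.
have poor a : a \in B -> a \in A /\ 64 * #|` prodShift A a| < t * k.
  rewrite in_fsetD mem_rich_shifts => /andP[].
  by case: (a \in A) => //; rewrite ltnNge.
have [a0 Ba0] : exists a, a \in B.
  by apply/fset0Pn; rewrite -cardfs_gt0; lia.
have tk_gt64 : 64 < t * k.
  have [Aa0 poor_a0] := poor a0 Ba0.
  have := card_prodShift_gt0 Aa0; lia.
have k_ge16 : 16 <= k by nia.
set n := t * k %/ 64.
pose xs := sort <=%O (B : seq R).
have xs_sorted : sorted <%O xs by rewrite sort_lt_sorted fset_uniq.
have sub_xsA : {subset xs <= A} by move=> a; rewrite mem_sort => /poor[].
have small_xs : {in xs, forall a, #|` prodShift A a| <= n}.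
  by move=> a; rewrite mem_sort => /poor[_ ?]; rewrite leq_divRL //; lia.
have size_xs : size xs = #|` B| by rewrite size_sort.
have card_B : #|` B| <= k by apply/fsubset_leq_card/fsubsetDl.
have few_xs : t ^ 2 * (size xs).-1 <= size (lines A).
  apply: leq_trans (size_lines A); rewrite size_xs mulnC.
  by apply: leq_mul; lia.
have t_gt0 : 0 < t by rewrite lt0n; apply: contraTneq tk_gt64 => ->.
have := few_small_shifts A xs n t t_gt0 xs_sorted sub_xsA small_xs few_xs.
have : (n %/ t) * t <= n by exact: leq_divM.
rewrite size_xs /n; nia.
Qed.

Lemma rich_shifts_half A : (INR #|` A| / 2 <= INR #|` rich_shifts A|)%R.
Proof.
have := poor_shifts_few A; rewrite cardfsDS ?rich_shifts_sub // => poor_few.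
have := fsubset_leq_card (rich_shifts_sub A) => rich_le.
have /le_INR : (#|` A| <= 2 * #|` rich_shifts A|)%coq_nat by lia.
rewrite mult_INR /=; lra.
Qed.

Lemma rich_shift_bound A a : a \in rich_shifts A ->
  (1 / 128 * (INR #|` A| * sqrt (INR #|` A|)) <= INR #|` prodShift A a|)%R.
Proof.
rewrite mem_rich_shifts => /andP[Aa rich_a].
set k := #|` A| in rich_a *; set t := Nat.sqrt k in rich_a.
set N := #|` prodShift A a| in rich_a *.
have [sqrt_le sqrt_gt] := Nat.sqrt_spec k (Nat.le_0_l k).
rewrite -/t in sqrt_le sqrt_gt.
have k_gt0 : 0 < k by rewrite cardfs_gt0; apply/fset0Pn; exists a.
(* [sqrt k <= 2 t] because [k < (t + 1)^2 <= (2 t)^2] *)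
have sqrt_k_le : (sqrt (INR k) <= INR (2 * t))%R.
  rewrite -(sqrt_square (INR (2 * t))); last exact: pos_INR.
  by apply: sqrt_le_1_alt; rewrite -mult_INR; apply: le_INR; nia.
have /le_INR : ((2 * t) * k <= 128 * N)%coq_nat by lia.
rewrite !mult_INR (_ : INR 128 = 128%R); last by rewrite INR_IZR_INZ.
have := pos_INR k; rewrite mult_INR in sqrt_k_le; nra.
Qed.

Theorem theorem2p9 :
  exists c : R, (0 < c)%R /\
  forall A : {fset R},
  exists A' : {fset R}, A' `<=` A /\
    (INR #|` A| / 2 <= INR #|` A'|)%R /\
    forall a : R, a \in A' ->
      (c * (INR #|` A| * sqrt (INR #|` A|)) <= INR #|` prodShift A a|)%R.
Proof.
exists (1 / 128)%R; split; first lra.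
move=> A; exists (rich_shifts A); split; first exact: rich_shifts_sub.
split; first exact: rich_shifts_half.
exact: rich_shift_bound.
Qed.
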